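(* Let $\mathcal{X}$ be a connected $n$-premaniplex with base flag $x_0$, let $(\mathcal{Y},\eta)$ be an $(n,m)$-voltage operator with $\mathcal{Y}$ connected and base flag $y_0$, let $N=\operatorname{Stab}_{\mathcal{C}^n}(x_0)$, $L=\operatorname{Stab}_{\mathcal{C}^m}(y_0)$, and $\zeta:L\to\mathcal{C}^n$, $\zeta(\omega)=\eta(W_\omega(y_0))$. Suppose $\mathcal{X}\rtimes_\eta\mathcal{Y}$ is connected. Then for $\omega\in\mathcal{C}^m$ there exists an automorphism $\alpha_\omega$ of $\mathcal{X}\rtimes_\eta\mathcal{Y}$ with $(x_0,y_0)\alpha_\omega=\omega(x_0,y_0)$ if and only if $\omega\in\operatorname{N}_{\mathcal{C}^m}(\zeta^{-1}(N))$; moreover $\operatorname{Aut}(\mathcal{X}\rtimes_\eta\mathcal{Y})\cong\operatorname{N}_{\mathcal{C}^m}(\zeta^{-1}(N))/\zeta^{-1}(N)$.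
   Context: An $n$-premaniplex is an edge-coloured graph (semi-edges and parallel edges allowed) with colours $\{0,\dots,n-1\}$ such that every vertex (flag) is the start of exactly one dart of each colour, and for $|i-j|\ge2$ alternating $i,j$-paths of length 4 are closed; $x^i$ is the $i$-adjacent flag of $x$. $\mathcal{C}^n=\langle r_0,\dots,r_{n-1}\mid r_i^2,\ (r_ir_j)^2\ (|i-j|\ge2)\rangle$ acts on the left on flags by $r_ix=x^i$; automorphisms act on the right. $\operatorname{N}_G(H)$ denotes the normaliser. For a flag $y$ of an $m$-premaniplex $\mathcal{Y}$ and $\omega\in\mathcal{C}^m$, $W_\omega(y)$ is the homotopy class of paths from $y$ whose colour sequence $i_1,\dots,i_k$ satisfies $r_{i_k}\cdots r_{i_1}=\omega$; these form the fundamental groupoid $\Pi(\mathcal{Y})$. A voltage assignment $\eta:\Pi(\mathcal{Y})\to\mathcal{C}^n$ satisfies $\eta(W_1W_2)=\eta(W_2)\eta(W_1)$; $(\mathcal{Y},\eta)$ is an $(n,m)$-voltage operator. $\mathcal{X}\rtimes_\eta\mathcal{Y}$ has flags $\mathcal{X}\times\mathcal{Y}$ and $(x,y)^i=(\eta(W_{r_i}(y))x,r_iy)$, $i\in\{0,\dots,m-1\}$; hence $\omega(x,y)=(\eta(W_\omega(y))x,\omega y)$. *)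

From mathcomp Require Import all_boot.
Set Implicit Arguments. Unset Strict Implicit. Unset Printing Implicit Defensive.

Definition far (k : nat) (i j : 'I_k) : bool := (i + 2 <= j)%N || (j + 2 <= i)%N.

(** The Coxeter group C^k = < r_0..r_{k-1} | r_i^2, (r_i r_j)^2 (|i-j|>=2) >,
    presented as words over 'I_k modulo the congruence generated by the
    relators.  The word [:: a1; ...; ak] denotes r_{a1} r_{a2} ... r_{ak}. *)
Inductive cox_eq (k : nat) : seq 'I_k -> seq 'I_k -> Prop :=
| cox_refl w : cox_eq w w
| cox_sym w w' : cox_eq w w' -> cox_eq w' w
| cox_trans w1 w2 w3 : cox_eq w1 w2 -> cox_eq w2 w3 -> cox_eq w1 w3
| cox_sq u v (i : 'I_k) : cox_eq (u ++ [:: i; i] ++ v) (u ++ v)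
| cox_far u v (i j : 'I_k) : far i j -> cox_eq (u ++ [:: i; j; i; j] ++ v) (u ++ v).

Definition wact (F : Type) (k : nat) (adj : 'I_k -> F -> F) (w : seq 'I_k) (x : F) : F :=
  foldr adj x w.

(** An n-premaniplex: flags with an i-adjacency for each colour i (x^i),
    each an involution (one dart of each colour at each flag; semi-edges are
    fixed points), and alternating i,j-paths of length 4 closed for |i-j|>=2. *)
Record premaniplex (n : nat) := Premaniplex {
  flag : Type;
  adj : 'I_n -> flag -> flag;
  adj_invol : forall i x, adj i (adj i x) = x;
  adj_far : forall i j x, far i j -> adj i (adj j (adj i (adj j x))) = x
}.

Definition connectedf (F : Type) (k : nat) (adj : 'I_k -> F -> F) : Prop :=
  forall x y : F, exists w, wact adj w x = y.

Definition pconnected (n : nat) (X : premaniplex n) : Prop := connectedf (@adj n X).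

(** The class W_omega(y) is
    represented by (y, w) with w a word for omega (it ends at omega y);
    eta must be well defined on classes and satisfy
    eta(W1 W2) = eta(W2) eta(W1), i.e. eta(W_{w'w}(y)) = eta(W_{w'}(w y)) eta(W_w(y)). *)
Definition is_voltage (n m : nat) (Y : premaniplex m)
    (eta : flag Y -> seq 'I_m -> seq 'I_n) : Prop :=
  (forall y w w', cox_eq w w' -> cox_eq (eta y w) (eta y w')) /\
  (forall y w w', cox_eq (eta y (w' ++ w)) (eta (wact (@adj m Y) w y) w' ++ eta y w)).

Definition prod_adj (n m : nat) (X : premaniplex n) (Y : premaniplex m)
    (eta : flag Y -> seq 'I_m -> seq 'I_n) (i : 'I_m) (p : flag X * flag Y)
    : flag X * flag Y :=
  (wact (@adj n X) (eta p.2 [:: i]) p.1, @adj m Y i p.2).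

(** Automorphism (acting on the right: (p)alpha := a p): colour-preserving
    bijection of flags. *)
Definition is_aut (F : Type) (k : nat) (adj : 'I_k -> F -> F) (a : F -> F) : Prop :=
  bijective a /\ forall i x, a (adj i x) = adj i (a x).

(** zeta^{-1}(N), with L = Stab(y0), N = Stab(x0), zeta(omega) = eta(W_omega(y0)). *)
Definition zeta_preim (n m : nat) (X : premaniplex n) (x0 : flag X)
    (Y : premaniplex m) (y0 : flag Y) (eta : flag Y -> seq 'I_m -> seq 'I_n)
    (w : seq 'I_m) : Prop :=
  wact (@adj m Y) w y0 = y0 /\ wact (@adj n X) (eta y0 w) x0 = x0.

(** omega is in the normaliser N_{C^k}(K) : omega K omega^{-1} = K
    (the inverse of the word w is rev w since generators are involutions). *)
Definition normalizes (k : nat) (K : seq 'I_k -> Prop) (w : seq 'I_k) : Prop :=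
  forall u, K u <-> K (w ++ u ++ rev w).

(* The flags of a connected premaniplex are the orbit of a base flag p0 under
   the word action, so an automorphism is determined by the image w p0 of p0,
   and the prescription u p0 |-> u (w p0) is well defined exactly when
   Stab(w p0) = Stab(p0), i.e. when w normalises Stab(p0); composition of such
   automorphisms is concatenation of words and the kernel is Stab(p0).  For
   X ⋊_eta Y the word action is w (x, y) = (eta(W_w(y)) x, w y), so the
   stabiliser of (x0, y0) is zeta^{-1}(N). *)

From mathcomp Require Import all_boot.
From Stdlib Require Import ClassicalEpsilon.

Set Implicit Arguments. Unset Strict Implicit.

Section WordAction.
Variables (F : Type) (k : nat) (ad : 'I_k -> F -> F).
Hypothesis adK : forall i, involutive (ad i).

Lemma wact_cat u v x : wact ad (u ++ v) x = wact ad u (wact ad v x).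
Proof. exact: foldr_cat. Qed.

Lemma wact_rev_wact w x : wact ad (rev w) (wact ad w x) = x.
Proof.
elim: w x => [//|i w IH] x.
by rewrite rev_cons -cats1 wact_cat /= adK IH.
Qed.

Lemma wact_wact_rev w x : wact ad w (wact ad (rev w) x) = x.
Proof. by rewrite -{1}(revK w) wact_rev_wact. Qed.

Lemma aut_wact a v x : is_aut ad a -> a (wact ad v x) = wact ad v (a x).
Proof. by case=> _ aC; elim: v => [//|i v IH] /=; rewrite aC IH. Qed.

Definition stab (p : F) (v : seq 'I_k) : Prop := wact ad v p = p.

Lemma stab_aut a p v : is_aut ad a -> stab (a p) v <-> stab p v.
Proof.
move=> aA; rewrite /stab -aut_wact //.
by case: aA => [[b aK _] _]; split=> [/(congr1 b)|->]; rewrite ?aK.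
Qed.

Lemma normalizes_stabE p w :
  normalizes (stab p) w <-> forall v, stab (wact ad (rev w) p) v <-> stab p v.
Proof.
rewrite /normalizes /stab.
have conjE v : wact ad (w ++ v ++ rev w) p = p <->
               wact ad v (wact ad (rev w) p) = wact ad (rev w) p.
  rewrite !wact_cat; split=> [/(congr1 (wact ad (rev w)))|->].
    by rewrite wact_rev_wact.
  by rewrite wact_wact_rev.
split=> nK v; first by rewrite -conjE -nK.
by rewrite conjE nK.
Qed.

Lemma normalizes_rev p w : normalizes (stab p) w -> normalizes (stab p) (rev w).
Proof.
move=> nK v; rewrite revK.
have := nK (rev w ++ v ++ w); rewrite /stab !wact_cat !wact_wact_rev.
by move=> E; split=> /E.
Qed.

Lemma normalizes_cat p w w' :
  normalizes (stab p) w -> normalizes (stab p) w' -> normalizes (stab p) (w ++ w').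
Proof. by move=> nK nK' v; rewrite nK' nK rev_cat !catA. Qed.

Lemma normalizes_stab_wact p w v :
  normalizes (stab p) w -> stab (wact ad w p) v <-> stab p v.
Proof. by move/normalizes_rev/normalizes_stabE; rewrite revK. Qed.

Lemma normalizes_wact_congr p w u u' : normalizes (stab p) w ->
  wact ad u p = wact ad u' p -> wact ad u (wact ad w p) = wact ad u' (wact ad w p).
Proof.
move=> nK E; have /(normalizes_stab_wact _ nK) : stab p (rev u' ++ u).
  by rewrite /stab wact_cat E wact_rev_wact.
by rewrite /stab wact_cat => /(congr1 (wact ad u')); rewrite wact_wact_rev.
Qed.

Lemma aut_normalizes a p w :
  is_aut ad a -> a p = wact ad w p -> normalizes (stab p) w.
Proof.
move=> aA apE; rewrite -(revK w); apply/normalizes_rev/normalizes_stabE => v.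
by rewrite revK -apE; apply: stab_aut.
Qed.

End WordAction.

Section Translation.
Variables (F : Type) (k : nat) (ad : 'I_k -> F -> F) (p0 : F).
Hypotheses (adK : forall i, involutive (ad i)) (conn : connectedf ad).

Definition word_to (p : F) : seq 'I_k :=
  proj1_sig (constructive_indefinite_description _ (conn p0 p)).

Lemma word_toP p : wact ad (word_to p) p0 = p.
Proof. exact: proj2_sig (constructive_indefinite_description _ (conn p0 p)). Qed.

Definition transl (w : seq 'I_k) (p : F) : F := wact ad (word_to p) (wact ad w p0).

Lemma translE w u :
  normalizes (stab ad p0) w -> transl w (wact ad u p0) = wact ad u (wact ad w p0).
Proof. by move=> nK; apply: normalizes_wact_congr => //; apply: word_toP. Qed.

Lemma transl_cat w w' p :
    normalizes (stab ad p0) w -> normalizes (stab ad p0) w' ->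
  transl (w ++ w') p = transl w' (transl w p).
Proof.
move=> nK nK'; rewrite -(word_toP p) [transl w _]translE // -wact_cat.
rewrite !translE //; last exact: normalizes_cat.
by rewrite !wact_cat.
Qed.

Lemma transl_aut w : normalizes (stab ad p0) w -> is_aut ad (transl w).
Proof.
move=> nK; have nKV := normalizes_rev adK nK; split.
  exists (transl (rev w)) => p; rewrite -transl_cat // -(word_toP p) translE.
  - by rewrite wact_cat wact_wact_rev.
  - exact: normalizes_cat.
  - by rewrite wact_cat wact_rev_wact.
  - exact: normalizes_cat.
move=> i p; rewrite -(word_toP p).
by rewrite -[ad i _]/(wact ad (i :: word_to p) p0) !translE.
Qed.

Lemma transl_id w :
  normalizes (stab ad p0) w -> (forall p, transl w p = p) <-> stab ad p0 w.
Proof.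
move=> nK; split=> [id_w | w_p0 p].
  by have := translE [::] nK; rewrite id_w => /esym.
by rewrite -(word_toP p) translE // w_p0.
Qed.

Lemma aut_transl a w :
  is_aut ad a -> a p0 = wact ad w p0 -> forall p, transl w p = a p.
Proof.
move=> aA apE p; rewrite -(word_toP p) translE; last exact: aut_normalizes aA apE.
by rewrite (aut_wact _ _ aA) apE.
Qed.

Lemma aut_to_wactP w :
  (exists a, is_aut ad a /\ a p0 = wact ad w p0) <-> normalizes (stab ad p0) w.
Proof.
split=> [[a [aA apE]] | nK]; first exact: aut_normalizes aA apE.
by exists (transl w); split; [apply: transl_aut | apply: (translE [::])].
Qed.

End Translation.

Lemma normalizes_ext k (K K' : seq 'I_k -> Prop) w :
  (forall v, K v <-> K' v) -> normalizes K w <-> normalizes K' w.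
Proof. by move=> KE; split=> nK u; have := nK u; rewrite ?KE -?KE. Qed.

Lemma cox_eq_wact n (X : premaniplex n) u v x :
  cox_eq u v -> wact (@adj n X) u x = wact (@adj n X) v x.
Proof.
elim=> // [w1 w2 w3 _ -> _ -> // | u' v' i | u' v' i j ij];
  by rewrite !wact_cat /= ?adj_invol ?adj_far.
Qed.

Section VoltageOperator.
Variables (n m : nat) (X : premaniplex n) (Y : premaniplex m)
  (eta : flag Y -> seq 'I_m -> seq 'I_n).
Hypothesis etaV : is_voltage eta.

Local Notation wactX := (wact (@adj n X)).
Local Notation prod := (@prod_adj n m X Y eta).

Lemma voltage_nil y x : wactX (eta y [::]) x = x.
Proof.
have := cox_eq_wact x (etaV.2 y [::] [::]); rewrite /= wact_cat => idem.
have := congr1 (wactX (rev (eta y [::]))) idem.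
by rewrite !(wact_rev_wact (@adj_invol n X)).
Qed.

Lemma prod_wact v x y :
  wact prod v (x, y) = (wactX (eta y v) x, wact (@adj m Y) v y).
Proof.
elim: v => [|i v IH]; first by rewrite /= voltage_nil.
rewrite /= IH /prod_adj /=.
by have := cox_eq_wact x (etaV.2 y v [:: i]); rewrite /= wact_cat => ->.
Qed.

Lemma prod_adjK i : involutive (prod i).
Proof.
case=> x y; rewrite -[prod i (prod i _)]/(wact prod [:: i; i] (x, y)) prod_wact /=.
by rewrite (cox_eq_wact x (etaV.1 y _ _ (cox_sq [::] [::] i))) voltage_nil adj_invol.
Qed.

Lemma zeta_preimE x0 y0 v : zeta_preim x0 y0 eta v <-> stab prod (x0, y0) v.
Proof. by rewrite /zeta_preim /stab prod_wact; split=> [[-> ->] | [-> ->]]. Qed.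

End VoltageOperator.

Theorem corollary5p3 (n m : nat) (X : premaniplex n) (x0 : flag X)
    (Y : premaniplex m) (y0 : flag Y) (eta : flag Y -> seq 'I_m -> seq 'I_n) :
  is_voltage eta ->
  pconnected X -> pconnected Y ->
  connectedf (@prod_adj n m X Y eta) ->
  (forall w : seq 'I_m,
     (exists a, is_aut (@prod_adj n m X Y eta) a /\
                a (x0, y0) = wact (@prod_adj n m X Y eta) w (x0, y0))
     <-> normalizes (zeta_preim x0 y0 eta) w) /\
  (exists Phi : seq 'I_m -> flag X * flag Y -> flag X * flag Y,
     (forall w, normalizes (zeta_preim x0 y0 eta) w ->
        is_aut (@prod_adj n m X Y eta) (Phi w)) /\
     (forall w w', normalizes (zeta_preim x0 y0 eta) w ->
        normalizes (zeta_preim x0 y0 eta) w' ->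
        forall p, Phi (w ++ w') p = Phi w' (Phi w p)) /\
     (forall w, normalizes (zeta_preim x0 y0 eta) w ->
        ((forall p, Phi w p = p) <-> zeta_preim x0 y0 eta w)) /\
     (forall a, is_aut (@prod_adj n m X Y eta) a ->
        exists w, normalizes (zeta_preim x0 y0 eta) w /\ forall p, Phi w p = a p)).
Proof.
move=> etaV _ _ conn.
have adK := prod_adjK etaV.
have nKE w : normalizes (zeta_preim x0 y0 eta) w <->
             normalizes (stab (prod_adj eta) (x0, y0)) w.
  exact/normalizes_ext/zeta_preimE.
split=> [w | ]; first by rewrite nKE; apply: aut_to_wactP.
exists (transl (x0, y0) conn); split; [|split; [|split]].
- by move=> w /nKE; apply: transl_aut.
- by move=> w w' /nKE nK /nKE nK' p; apply: transl_cat.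
- by move=> w /nKE nK; rewrite zeta_preimE //; apply: transl_id.
- move=> a aA; have [w apE] := conn (x0, y0) (a (x0, y0)).
  exists w; rewrite nKE; split; first exact: aut_normalizes aA (esym apE).
  exact: aut_transl aA (esym apE).
Qed.
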